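(* Let $\phi(x,z)$ be an associate of the additive formal group $F(x,y)=x+y$ with $\phi(x,z)\ne x$. Then $f(\phi(x,z),x)\ne0$ for every nonzero $f(x_1,x)\in\mathbb{C}((x_1,x))$.
   Context: An associate of $F(x,y)=x+y$ is $\phi(x,z)\in\mathbb{C}((x))[[z]]$ with $\phi(x,0)=x$ and $\phi(\phi(x,x_2),x_0)=\phi(x,x_0+x_2)$. $\mathbb{C}((x_1,x))=\mathbb{C}[[x_1,x]][x_1^{-1},x^{-1}]$. For $f(x_1,x)=\sum_{m,n\ge k}a(m,n)x_1^mx^n$, $f(\phi(x,z),x):=\sum_{m,n}a(m,n)\phi(x,z)^mx^n\in\mathbb{C}((x))[[z]]$, where $\phi(x,z)^m$ for $m<0$ is the inverse power in $\mathbb{C}((x))[[z]]$ (writing $\phi(x,z)=x+zA$, $\phi^m=\sum_{i\ge0}\binom mi x^{m-i}z^iA^i$). *)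

(* Formal series are represented by explicit coefficient data
   together with an explicit lower bound on the exponents. *)
From HB Require Import structures.
From mathcomp Require Import all_boot all_order all_algebra.
From mathcomp Require Import complex.
From mathcomp Require Import reals.

Set Implicit Arguments.
Unset Strict Implicit.
Unset Printing Implicit Defensive.

Import Order.TTheory GRing.Theory Num.Theory.
Local Open Scope ring_scope.

Section FormalSeries.
Variable K : comNzRingType.

(* ---------- Laurent series in x :  C((x)) ----------
   A pair (N, c) represents  sum_{n >= 0} c n * x^(N + n). *)
Definition LS := (int * (nat -> K))%type.

Definition lc (s : LS) (e : int) : K :=
  match (e - s.1)%R with Posz n => s.2 n | Negz _ => 0 end.

Definition ls_zero : LS := (0%Z, fun _ => 0).
Definition ls_one : LS := (0%Z, fun n => (n == 0%N)%:R).
Definition ls_xpow (m : int) : LS := (m, fun n => (n == 0%N)%:R).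
Definition ls_add (a b : LS) : LS :=
  let N := Order.min a.1 b.1 in (N, fun n => lc a (N + n%:Z) + lc b (N + n%:Z)).
Definition ls_scale (c : K) (a : LS) : LS := (a.1, fun n => c * a.2 n).
Definition ls_mul (a b : LS) : LS :=
  ((a.1 + b.1)%R, fun n => \sum_(k < n.+1) a.2 k * b.2 (n - k)%N).

(* ---------- C((x))[[z]] ----------
   P : nat -> LS represents sum_i (P i) z^i. *)
Definition LZ := (nat -> LS)%type.

Definition lz_one : LZ := fun i => if i == 0%N then ls_one else ls_zero.
Definition lz_mul (P Q : LZ) : LZ :=
  fun i => \big[ls_add/ls_zero]_(j < i.+1) ls_mul (P j) (Q (i - j)%N).
Fixpoint lz_pow (P : LZ) (k : nat) : LZ :=
  if k is k'.+1 then lz_mul P (lz_pow P k') else lz_one.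

Definition binz (m : int) (k : nat) : int :=
  match m with
  | Posz p => ('C(p, k))%:Z
  | Negz p => ((-1) ^+ k * ('C(p + k, k))%:Z)%R
  end.

(* For phi(x,z) = x + z A  (A i := phi (i+1)), the power phi^m (m : int),
   defined as in the paper by  phi^m = sum_k binom(m,k) x^(m-k) z^k A^k;
   phipow phi m i is its coefficient of z^i. *)
Definition shiftA (phi : LZ) : LZ := fun i => phi i.+1.

Definition phipow (phi : LZ) (m : int) (i : nat) : LS :=
  \big[ls_add/ls_zero]_(k < i.+1)
     ls_scale (binz m k)%:~R
       (ls_mul (ls_xpow (m - k%:Z)) (lz_pow (shiftA phi) k (i - k)%N)).

(* A lower bound for the x-exponents of the coefficients (A^k)_(i-k), k <= i;
   hence every x-exponent occurring in phipow phi m i is >= m - i + lowA phi i. *)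
Definition lowA (phi : LZ) (i : nat) : int :=
  \big[Order.min/0%Z]_(k < i.+1) (lz_pow (shiftA phi) k (i - k)%N).1.

(* g(phi(x,z)) for g = (N, c) in C((y)):  coefficient of z^i x^e of
   sum_t c t * phi^(N+t).  Only the terms with N + t <= e + i - lowA phi i
   can contribute, so the (formally infinite) sum is the finite sum below. *)
Definition subst_coef (phi : LZ) (g : LS) (i : nat) (e : int) : K :=
  \sum_(t < (absz (e - g.1 + i%:Z - lowA phi i)%R).+1)
     g.2 t * lc (phipow phi (g.1 + t%:Z) i) e.

(* ---------- C((x1,x)) ----------
   A pair (k, a) represents f(x1,x) = sum_{p,q >= 0} a p q x1^(k+p) x^(k+q),
   i.e. sum_{m,n >= k} a(m,n) x1^m x^n. *)
Definition LL := (int * (nat -> nat -> K))%type.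

Definition LL_nonzero (f : LL) : Prop := exists p q, f.2 p q != 0.

(* f(phi(x,z),x): coefficient of z^i x^e of
   sum_{p,q} a p q phi^(k+p) x^(k+q); only p + q <= e - 2k + i - lowA phi i
   can contribute. *)
Definition fsubst_coef (phi : LZ) (f : LL) (i : nat) (e : int) : K :=
  let B := absz (e - 2%:Z * f.1 + i%:Z - lowA phi i)%R in
  \sum_(p < B.+1) \sum_(q < B.+1)
     f.2 p q * lc (phipow phi (f.1 + p%:Z) i) (e - (f.1 + q%:Z)).

(* phi is an associate of F(x,y) = x + y:
   phi(x,0) = x  and  phi(phi(x,x2),x0) = phi(x,x0+x2) in C((x))[[x2,x0]],
   compared coefficientwise at x2^i x0^j x^e
   (RHS: coefficient of x2^i x0^j in phi_(i+j)(x) (x0+x2)^(i+j)). *)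
Definition associate_add (phi : LZ) : Prop :=
  (forall e, lc (phi 0%N) e = (e == 1%Z)%:R) /\
  (forall (i j : nat) (e : int),
      subst_coef phi (phi j) i e = ('C(i + j, j))%:R * lc (phi (i + j)%N) e).

Definition lz_is_x (phi : LZ) : Prop :=
  forall (i : nat) (e : int), lc (phi i) e = ((i == 0%N) && (e == 1%Z))%:R.

End FormalSeries.

(* Write phi(x,z) = x + z A(x,z).  Associativity forces phi = x as soon as
   A(x,0) = phi_1 vanishes, so phi_1 is a nonzero Laurent series with some
   valuation v.  Expanding f(x1,x) in powers of x1 - x gives
   f(phi(x,z),x) = sum_k z^k A^k T_k(x), where T_k is the k-th Taylor
   coefficient of f restricted to the diagonal x1 = x.  Since the rows
   (binom(m+p,k))_k are linearly independent, some T_k is nonzero; for the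
   least such i the coefficient of z^i is T_i(x) phi_1(x)^i, whose
   coefficient at (valuation of T_i) + i v is a product of two nonzero
   leading coefficients. *)
From HB Require Import structures.
From mathcomp Require Import all_boot all_order all_algebra.
From mathcomp Require Import complex reals boolp.
From mathcomp Require Import ring zify.
Import Order.TTheory GRing.Theory Num.Theory.
Local Open Scope ring_scope.

Set Implicit Arguments.
Unset Strict Implicit.
Unset Printing Implicit Defensive.

Section LaurentCoefficients.
Variable K : comNzRingType.
Implicit Types (s a b : LS K) (d e v : int).

Lemma lc_lt s e : e < s.1 -> lc s e = 0.
Proof. by rewrite /lc -subr_lt0; case: (e - s.1). Qed.

Lemma lc_neq0_ge s e : lc s e != 0 -> s.1 <= e.
Proof. by apply: contraR; rewrite -ltNge => /lc_lt ->; rewrite eqxx. Qed.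

Lemma lc_shift s (t : nat) : lc s (s.1 + t%:Z) = s.2 t.
Proof. by rewrite /lc addrC addKr. Qed.

Lemma lc_ls_zero e : lc (ls_zero K) e = 0.
Proof. by rewrite /lc; case: (e - _). Qed.

Lemma lc_ls_add a b e : lc (ls_add a b) e = lc a e + lc b e.
Proof.
rewrite /ls_add /lc /=; case E: (e - Num.min a.1 b.1) => [n|n].
  by rewrite (_ : Num.min a.1 b.1 + n%:Z = e) // -E addrC subrK.
have hN : e < Num.min a.1 b.1 by rewrite -subr_lt0 E.
have ha : e < a.1 by apply: (lt_le_trans hN); rewrite ge_min lexx.
have hb : e < b.1 by apply: (lt_le_trans hN); rewrite ge_min lexx orbT.
by move: (lc_lt ha) (lc_lt hb); rewrite /lc => -> ->; rewrite addr0.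
Qed.

Lemma lc_big_ls_add n (F : 'I_n -> LS K) e :
  lc (\big[@ls_add K/ls_zero K]_(j < n) F j) e = \sum_(j < n) lc (F j) e.
Proof.
exact: (big_morph (fun s => lc s e) (fun a b => lc_ls_add a b e) (lc_ls_zero e)).
Qed.

Lemma lc_ls_scale c a e : lc (ls_scale c a) e = c * lc a e.
Proof. by rewrite /lc /=; case: (e - a.1) => // ?; rewrite mulr0. Qed.

Lemma lc_ls_mul_xpow d b e : lc (ls_mul (ls_xpow K d) b) e = lc b (e - d).
Proof.
rewrite /lc /= opprD addrA; case: (e - d - b.1) => // n.
by rewrite big_ord_recl mul1r subn0 big1 ?addr0 // => i _; rewrite mul0r.
Qed.

Definition vanishes_below s v := forall e, e < v -> lc s e = 0.

Lemma vanishes_below_max s v : vanishes_below s v -> vanishes_below s (Num.max v s.1).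
Proof. by move=> hv e; rewrite lt_max => /orP[/hv|/lc_lt]. Qed.

Lemma lc_ls_mul_lt a b va vb e : vanishes_below a va -> vanishes_below b vb ->
  e < va + vb -> lc (ls_mul a b) e = 0.
Proof.
move=> ha hb he; rewrite /lc /=; case E: (e - (a.1 + b.1)) => [n|n] //.
apply: big1 => k _; rewrite -(lc_shift a) -(lc_shift b).
have hk : (k <= n)%N by rewrite -ltnS.
have [/ha -> |h1] := ltP (a.1 + k%:Z) va; first by rewrite mul0r.
rewrite hb ?mulr0 //.
have : e = a.1 + b.1 + n%:Z by rewrite -E addrC subrK.
lia.
Qed.

Lemma lc_ls_mul_lead a b va vb : vanishes_below a va -> vanishes_below b vb ->
  lc (ls_mul a b) (va + vb) = lc a va * lc b vb.
Proof.
move=> ha hb; have hab := lc_ls_mul_lt (vanishes_below_max ha) (vanishes_below_max hb).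
have [h1|h1] := ltP va a.1.
  by rewrite (lc_lt h1) mul0r hab // ltr_leD ?lt_max ?h1 ?orbT ?le_max ?lexx.
have [h2|h2] := ltP vb b.1.
  by rewrite (lc_lt h2) mulr0 hab // ler_ltD ?lt_max ?h2 ?orbT ?le_max ?lexx.
have [s vaE] : exists s : nat, va = a.1 + s%:Z.
  by exists `|va - a.1|%N; rewrite gez0_abs ?subr_ge0 //; ring.
have [t vbE] : exists t : nat, vb = b.1 + t%:Z.
  by exists `|vb - b.1|%N; rewrite gez0_abs ?subr_ge0 //; ring.
subst va vb.
rewrite !lc_shift /lc /=.
have -> : a.1 + s%:Z + (b.1 + t%:Z) - (a.1 + b.1) = (s + t)%N%:Z.
  by rewrite PoszD; ring.
have hs : (s < (s + t).+1)%N by rewrite ltnS leq_addr.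
rewrite (bigD1 (Ordinal hs)) //= addKn big1 ?addr0 // => k /eqP hk.
have hk' : k != s :> nat by apply/eqP => ks; apply: hk; apply: val_inj.
case: (ltngtP k s) hk' => // hks _.
  by rewrite -(lc_shift a) ha ?mul0r // ltrD2l ltz_nat.
rewrite -(lc_shift b) hb ?mulr0 // ltrD2l ltz_nat.
have : (k <= s + t)%N by rewrite -ltnS.
lia.
Qed.

Lemma lc_valuation s : (exists e, lc s e != 0) ->
  exists v, vanishes_below s v /\ lc s v != 0.
Proof.
move=> [e he].
have exP : exists t : nat, lc s (s.1 + t%:Z) != 0.
  exists `|e - s.1|%N; rewrite gez0_abs ?subr_ge0 ?lc_neq0_ge //.
  by rewrite addrCA subrr addr0.
case: (ex_minnP exP) => t ht tmin; exists (s.1 + t%:Z); split => // x hx.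
have [/lc_lt //|h1] := ltP x s.1.
have [//|hne] := eqVneq (lc s x) 0.
have /tmin : lc s (s.1 + `|x - s.1|%N%:Z) != 0.
  by rewrite gez0_abs ?subr_ge0 // addrCA subrr addr0.
rewrite -lez_nat gez0_abs ?subr_ge0 //; lia.
Qed.

End LaurentCoefficients.

Section ZSeriesCoefficients.
Variable K : comNzRingType.

Lemma lc_lz_mul0 (P Q : LZ K) e :
  lc (lz_mul P Q 0%N) e = lc (ls_mul (P 0%N) (Q 0%N)) e.
Proof. by rewrite /lz_mul lc_big_ls_add big_ord1. Qed.

Lemma lz_pow_coef0 (P : LZ K) v : vanishes_below (P 0%N) v -> forall k : nat,
  vanishes_below (lz_pow P k 0%N) (k%:Z * v) /\
  lc (lz_pow P k 0%N) (k%:Z * v) = lc (P 0%N) v ^+ k.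
Proof.
move=> hv; elim=> [|k [IHv IHc]].
  rewrite mul0r expr0; split; last by rewrite /lc.
  by case=> // n; rewrite ltz_nat.
rewrite intS mulrDl mul1r; split => [e he|] /=; rewrite lc_lz_mul0.
  exact: lc_ls_mul_lt hv IHv he.
by rewrite (lc_ls_mul_lead hv IHv) IHc exprS.
Qed.

Lemma lc_phipow (phi : LZ K) m i e : lc (phipow phi m i) e =
  \sum_(k < i.+1) (binz m k)%:~R *
    lc (lz_pow (shiftA phi) k (i - k)%N) (e - (m - k%:Z)).
Proof.
by rewrite /phipow lc_big_ls_add; apply: eq_bigr => k _; rewrite lc_ls_scale lc_ls_mul_xpow.
Qed.

Lemma lowA_le (phi : LZ K) i (k : nat) : (k <= i)%N ->
  lowA phi i <= (lz_pow (shiftA phi) k (i - k)%N).1.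
Proof.
by rewrite -ltnS => hk; exact: (bigmin_le _ (Ordinal hk) (fun k : 'I_i.+1 => _)).
Qed.

End ZSeriesCoefficients.

Section GeneralizedBinomial.
Variable K : comNzRingType.

Lemma binz0 m : binz m 0 = 1.
Proof. by case: m => n /=; rewrite ?addn0 bin0 // expr0 mul1r. Qed.

Lemma binzS m k : binz (m + 1) k.+1 = binz m k.+1 + binz m k.
Proof.
case: m => [n|n]; first by rewrite -PoszD addn1 /= binS PoszD.
case: n => [|n].
  have -> : Negz 0 + 1 = 0 by [].
  by rewrite /= bin0n !add0n !binn exprS mulN1r !mulr1 addNr.
have -> : Negz n.+1 + 1 = Negz n by rewrite !NegzE; ring.
by rewrite /= addSn binS addSn -addnS PoszD exprS; ring.
Qed.

Lemma binz_comb_eq0 (a : nat -> K) n m :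
  (forall k, \sum_(p < n.+1) a p * (binz (m + p%:Z) k)%:~R = 0) ->
  forall p, (p <= n)%N -> a p = 0.
Proof.
(* Pascal's rule shifts m by any natural number; once m + p >= 0 for all p,
   the choice k = m + (largest p with a p != 0) isolates that single term. *)
move=> h0.
have hshift (j : nat) k : \sum_(p < n.+1) a p * (binz (m + j%:Z + p%:Z) k)%:~R = 0.
  elim: j k => [|j IHj] k; first by under eq_bigr do rewrite addr0; exact: h0.
  case: k => [|k].
    by rewrite -[RHS](IHj 0%N); apply: eq_bigr => p _; rewrite !binz0.
  rewrite -[RHS](addr0 0) -[X in _ = X + _](IHj k.+1) -[X in _ = _ + X](IHj k).
  rewrite -big_split; apply: eq_bigr => p _ /=.
  rewrite -mulrDr -intrD -binzS.
  by congr (_ * (binz _ _)%:~R); rewrite intS; ring.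
have [c cE] : exists c : nat, m + `|m|%N%:Z = c%:Z.
  by case: m {h0 hshift} => t; [exists (t + t)%N | exists 0%N; rewrite NegzE /=; ring].
have hc k : \sum_(p < n.+1) a p * ('C(c + p, k))%:Z%:~R = 0.
  by rewrite -[RHS](hshift `|m|%N k) cE; apply: eq_bigr => p _; rewrite -PoszD.
move=> p0 hp0; apply/eqP; apply: contraT => hap0.
have exP : exists p, (p <= n)%N && (a p != 0) by exists p0; rewrite hp0.
have ubP p : (p <= n)%N && (a p != 0) -> (p <= n)%N by case/andP.
case: (ex_maxnP exP ubP) => pm /andP[hpm hapm] pmax.
have hpm' : (pm < n.+1)%N by [].
move: (hc (c + pm)%N); rewrite (bigD1 (Ordinal hpm')) //= binn mulr1 big1 ?addr0.
  by move/eqP; rewrite (negbTE hapm).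
move=> p hp; have hp' : (p : nat) != pm by apply: contraNneq hp => e; apply/eqP/val_inj.
case: (ltngtP p pm) hp' => // hlt _.
  by rewrite bin_small ?mulr0 // ltn_add2l.
have : ~~ ((p <= n)%N && (a p != 0)) by apply: contraTN hlt => /pmax; rewrite leqNgt.
by rewrite -ltnS (ltn_ord p) /= negbK => /eqP ->; rewrite mul0r.
Qed.

End GeneralizedBinomial.

Lemma sum_square_antidiag (V : nmodType) (F : nat -> nat -> V) B :
  (forall p q, (B < p + q)%N -> F p q = 0) ->
  \sum_(p < B.+1) \sum_(q < B.+1) F p q =
  \sum_(n < B.+1) \sum_(p < n.+1) F p (n - p)%N.
Proof.
move=> hF.
transitivity (\sum_(n < B.+1) \sum_(p < B.+1) if (p <= n)%N then F p (n - p)%N else 0).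
  rewrite [RHS]exchange_big /=; apply: eq_bigr => p _.
  rewrite -(big_mkord xpredT (F p)).
  rewrite -(big_mkord xpredT (fun n => if (p <= n)%N then F p (n - p)%N else 0)).
  have hp : (p <= B.+1)%N by apply: ltnW.
  rewrite [RHS](big_cat_nat (n := p)) //= [X in _ = X + _]big1_seq ?add0r; last first.
    by move=> n; rewrite mem_index_iota => /andP[_]; rewrite ltnNge => /negbTE ->.
  rewrite -{1}[in RHS](add0n p) big_addn.
  rewrite [LHS](big_cat_nat (n := (B.+1 - p)%N)) ?leq_subr // -[RHS]addr0.
  congr (_ + _).
    by apply: congr_big_nat => // q _; rewrite leq_addl addnK.
  by rewrite big1_seq // => q /andP[_]; rewrite mem_index_iota => /andP[hq _]; apply: hF; lia.
apply: eq_bigr => n _.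
rewrite (big_ord_widen B.+1 (fun p => F p (n - p)%N)) // [RHS]big_mkcond.
by apply: eq_bigr => p _; rewrite ltnS.
Qed.

Section Substitution.
Variable K : comNzRingType.
Implicit Types (phi : LZ K) (f : LL K).

(* The coefficient of x^(2 f.1 + n - k) in T_k(x), the value at x1 = x of
   (1/k!) (d/dx1)^k f(x1,x). *)
Definition taylor_diag_coef f (k n : nat) : K :=
  \sum_(p < n.+1) f.2 p (n - p)%N * (binz (f.1 + p%:Z) k)%:~R.

Lemma fsubst_coef_taylor phi f i e :
  fsubst_coef phi f i e =
  \sum_(k < i.+1) \sum_(n < (absz (e - 2%:Z * f.1 + i%:Z - lowA phi i)%R).+1)
     taylor_diag_coef f k n *
     lc (lz_pow (shiftA phi) k (i - k)%N) (e - 2%:Z * f.1 - n%:Z + k%:Z).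
Proof.
rewrite /fsubst_coef /=; set B := absz _.
have hB : e - 2%:Z * f.1 + i%:Z - lowA phi i <= B%:Z by rewrite abszE ler_norm.
pose A k := lz_pow (shiftA phi) k (i - k)%N.
pose F k p q := f.2 p q * (binz (f.1 + p%:Z) k)%:~R *
  lc (A k) (e - 2%:Z * f.1 - (p + q)%N%:Z + k%:Z).
transitivity (\sum_(k < i.+1) \sum_(p < B.+1) \sum_(q < B.+1) F k p q).
  rewrite [RHS]exchange_big; apply: eq_bigr => p _.
  rewrite [RHS]exchange_big; apply: eq_bigr => q _.
  rewrite lc_phipow mulr_sumr; apply: eq_bigr => k _.
  rewrite /F /A mulrA; congr (_ * lc _ _).
  by rewrite PoszD; ring.
apply: eq_bigr => k _; rewrite (sum_square_antidiag (F := F k)); last first.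
  move=> p q hpq; rewrite /F lc_lt ?mulr0 //.
  have := @lowA_le _ phi i k; rewrite -ltnS /A => /(_ (ltn_ord k)).
  have := ltn_ord k; rewrite ltnS -lez_nat; move: hpq; rewrite -ltz_nat; lia.
apply: eq_bigr => n _; rewrite /taylor_diag_coef big_distrl; apply: eq_bigr => p _.
by rewrite /F subnKC // -ltnS.
Qed.

Lemma taylor_diag_coef_neq0 f : LL_nonzero f -> exists k n, taylor_diag_coef f k n != 0.
Proof.
move=> [p0 [q0 hf]].
have /existsNP [k hk] : ~ forall k, taylor_diag_coef f k (p0 + q0) = 0.
  move=> /(@binz_comb_eq0 _ (fun p => f.2 p (p0 + q0 - p)%N)) /(_ p0 (leq_addr q0 p0)) /eqP.
  by rewrite addKn (negbTE hf).
by exists k, (p0 + q0)%N; apply/eqP.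
Qed.

End Substitution.

Section Nonvanishing.
Variable K : idomainType.
Implicit Types (phi : LZ K) (f : LL K).

Lemma fsubst_coef_lead phi f v i ns :
  vanishes_below (phi 1%N) v -> lc (phi 1%N) v != 0 ->
  (forall k n, (k < i)%N -> taylor_diag_coef f k n = 0) ->
  (forall n, (n < ns)%N -> taylor_diag_coef f i n = 0) ->
  fsubst_coef phi f i (i%:Z * v + 2%:Z * f.1 + ns%:Z - i%:Z) =
  taylor_diag_coef f i ns * lc (phi 1%N) v ^+ i.
Proof.
move=> hv hc lowk lown; rewrite fsubst_coef_taylor; set B := absz _.
set e : int := _ - i%:Z.
have hB : e - 2%:Z * f.1 + i%:Z - lowA phi i <= B%:Z by rewrite abszE ler_norm.
have [Aiv Aic] := @lz_pow_coef0 _ (shiftA phi) v hv i.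
rewrite -[phi 1%N]/(shiftA phi 0%N) in hc *.
rewrite big_ord_recr /= big1 ?add0r => [|k _]; last first.
  by apply: big1 => n _; rewrite lowk ?mul0r.
rewrite subnn.
have hns : (ns < B.+1)%N.
  have := @lowA_le _ phi i i (leqnn i); rewrite subnn.
  have : (lz_pow (shiftA phi) i 0%N).1 <= i%:Z * v.
    by apply: lc_neq0_ge; rewrite Aic expf_neq0.
  by rewrite ltnS -lez_nat; move: hB; rewrite /e; lia.
have argE (n : nat) : e - 2%:Z * f.1 - n%:Z + i%:Z = i%:Z * v + (ns%:Z - n%:Z).
  by rewrite /e; ring.
rewrite (bigD1 (Ordinal hns)) //= big1 ?addr0 => [|n hn]; last first.
  have {}hn : (n : nat) != ns by apply: contraNneq hn => nE; apply/eqP/val_inj.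
  case: (ltngtP n ns) hn => // hlt _; first by rewrite lown ?mul0r.
  by rewrite argE Aiv ?mulr0 // gtrDl subr_lt0 ltz_nat.
by rewrite argE subrr addr0 Aic.
Qed.

Theorem fsubst_coef_neq0 phi f : (exists e, lc (phi 1%N) e != 0) ->
  LL_nonzero f -> exists i e, fsubst_coef phi f i e != 0.
Proof.
move=> /lc_valuation [v [hv hc]] /taylor_diag_coef_neq0 hf.
have exI : exists k, `[< exists n, taylor_diag_coef f k n != 0 >].
  by case: hf => k hk; exists k; apply/asboolP.
case: (ex_minnP exI) => i /asboolP exN imin.
case: (ex_minnP exN) => ns hns nsmin.
exists i, (i%:Z * v + 2%:Z * f.1 + ns%:Z - i%:Z).
rewrite (fsubst_coef_lead hv hc) ?mulf_neq0 ?expf_neq0 // => [k n hk|n hn].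
  apply/eqP; apply: contraTT hk => hkn; rewrite -leqNgt imin //.
  by apply/asboolP; exists n.
by apply/eqP; apply: contraTT hn => /nsmin; rewrite leqNgt.
Qed.

End Nonvanishing.

Lemma associate_add_phi1_neq0 (K : numDomainType) (phi : LZ K) :
  associate_add phi -> ~ lz_is_x phi -> exists e, lc (phi 1%N) e != 0.
Proof.
move=> [phi0 hass] hnx; apply/not_existsP => phi1_neq0.
have phi1 e : lc (phi 1%N) e = 0 by apply/eqP/negPn/negP/phi1_neq0.
apply: hnx => -[|[|r]] e /=; [exact: phi0 | exact: phi1 |].
apply/eqP; have := hass r.+1 1%N e.
rewrite /subst_coef big1 => [|t _]; last by rewrite -lc_shift phi1 mul0r.
by rewrite addn1 bin1 => /esym/eqP; rewrite mulf_eq0 pnatr_eq0.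
Qed.

Unset Implicit Arguments.

Theorem lemma2p7 (R : realType) (phi : LZ R[i]) :
  associate_add phi -> ~ lz_is_x phi ->
  forall f : LL R[i], LL_nonzero f ->
  exists (i : nat) (e : int), fsubst_coef phi f i e != 0.
Proof.
move=> hass hnx f; exact/fsubst_coef_neq0/(associate_add_phi1_neq0 hass hnx).
Qed.
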